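(* Let $X$ be a fibrewise pointed space over $B$. If $X$ is fibrewise locally equiconnected and $X\times_BX$ is a normal space, then $$\mathrm{TC}_B(X)\le\mathrm{TC}^B_B(X)\le\mathrm{TC}_B(X)+1.$$
   Context: A fibrewise space over $B$ is a space $X$ with $p_X:X\to B$; fibrewise maps satisfy $p_Y\circ f=p_X$; fibrewise homotopies $H$ satisfy $p_Y(H(x,t))=p_X(x)$ ($\simeq_B$). A fibrewise pointed space has $s_X:B\to X$ with $p_X\circ s_X=1_B$; fibrewise pointed homotopies additionally satisfy $H(s_X(b),t)=s_Y(b)$ ($\simeq^B_B$). A fibrewise map $j:A\to X$ is a fibrewise cofibration if it has the homotopy extension property for fibrewise homotopies: for every fibrewise map $f:X\to Y$ and fibrewise homotopy $H:A\times I\to Y$ with $H(-,0)=f\circ j$ there is a fibrewise homotopy $\tilde H:X\times I\to Y$ with $\tilde H(-,0)=f$ and $\tilde H\circ(j\times 1_I)=H$; it is closed if it is a closed embedding. $X$ is fibrewise locally equiconnected if the diagonal $\Delta_X:X\to X\times_BX=\{(x,y):p_X(x)=p_X(y)\}$ is a closed fibrewise cofibration. $\mathrm{secat}_B(f)$ (resp. $\mathrm{secat}^B_B(f)$) for a fibrewise (resp. fibrewise pointed) map $f:E\to X$ is the least $k$ such that $X$ is covered by $k+1$ open sets $U$ (resp. open sets $U\supseteq s_X(B)$) admitting a fibrewise (resp. fibrewise pointed) map $s:U\to E$ with $f\circ s\simeq_B$ (resp. $\simeq^B_B$) the inclusion. $P_B(X)=\{(b,\alpha)\in B\times X^I:p_X\circ\alpha\equiv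 b\}$ with projection $(b,\alpha)\mapsto b$ and section $b\mapsto(b,c_{s_X(b)})$; $X\times_BX$ has section $b\mapsto(s_X(b),s_X(b))$; $\Pi_X(b,\alpha)=(\alpha(0),\alpha(1))$. $\mathrm{TC}_B(X)=\mathrm{secat}_B(\Pi_X)$ and $\mathrm{TC}^B_B(X)=\mathrm{secat}^B_B(\Pi_X)$. *)

From HB Require Import structures.
From mathcomp Require Import all_boot all_order all_algebra.
From mathcomp Require Import all_classical reals ereal topology normedtype.

Set Implicit Arguments.
Unset Strict Implicit.
Unset Printing Implicit Defensive.
Import Order.TTheory GRing.Theory Num.Theory.
Import numFieldNormedType.Exports.

Local Open Scope classical_set_scope.
Local Open Scope ring_scope.

Section Fibrewise.
Context {R : realType} {B : topologicalType}.

Definition II : topologicalType := set_type [set x : R | 0 <= x <= 1].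

Definition fibrewise {E Y : Type} (pE : E -> B) (pY : Y -> B) (f : E -> Y) :=
  forall x, pY (f x) = pE x.

Definition fhtpy {E Y : topologicalType} (pE : E -> B) (pY : Y -> B)
    (f g : E -> Y) : Prop :=
  exists H : E * II -> Y, [/\ continuous H,
    (forall x (t : II), set_val t = 0 -> H (x, t) = f x),
    (forall x (t : II), set_val t = 1 -> H (x, t) = g x) &
    (forall x t, pY (H (x, t)) = pE x)].

(** Fibrewise pointed homotopy f ~^B_B g : E -> Y, where [bE] is the set of
    base points s_E(B) of E and [sY] the section of Y:
    additionally H (s_E b, t) = s_Y b (here b = p_E (s_E b)). *)
Definition fphtpy {E Y : topologicalType} (pE : E -> B) (bE : set E)
    (pY : Y -> B) (sY : B -> Y) (f g : E -> Y) : Prop :=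
  exists H : E * II -> Y, [/\ continuous H,
    (forall x (t : II), set_val t = 0 -> H (x, t) = f x),
    (forall x (t : II), set_val t = 1 -> H (x, t) = g x),
    (forall x t, pY (H (x, t)) = pE x) &
    (forall x t, bE x -> H (x, t) = sY (pE x))].

Definition closed_embedding {A X : topologicalType} (j : A -> X) : Prop :=
  [/\ continuous j, injective j, closed (range j) &
    forall U : set A, open U -> exists V : set X, open V /\ j @` U = V `&` range j].

Definition fcofibration {A X : topologicalType} (pA : A -> B) (pX : X -> B)
    (j : A -> X) : Prop :=
  continuous j /\ fibrewise pA pX j /\
  forall (Y : topologicalType) (pY : Y -> B) (f : X -> Y) (H : A * II -> Y),
    continuous f -> fibrewise pX pY f ->
    continuous H -> (forall a t, pY (H (a, t)) = pA a) ->
    (forall a (t : II), set_val t = 0 -> H (a, t) = f (j a)) ->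
    exists H' : X * II -> Y, [/\ continuous H',
      (forall x t, pY (H' (x, t)) = pX x),
      (forall x (t : II), set_val t = 0 -> H' (x, t) = f x) &
      (forall a t, H' (j a, t) = H (a, t))].

Definition FP {X : topologicalType} (pX : X -> B) : topologicalType :=
  set_type [set xy : X * X | pX xy.1 = pX xy.2].

Definition pFP {X : topologicalType} (pX : X -> B) (z : FP pX) : B :=
  pX (set_val z).1.

Definition diagFP {X : topologicalType} (pX : X -> B) (x : X) : FP pX :=
  @SigSub _ _ [set xy : X * X | pX xy.1 = pX xy.2] (x, x) (mem_set erefl).

Definition sFP {X : topologicalType} (pX : X -> B) (sX : B -> X) (b : B)
  : FP pX := diagFP pX (sX b).

Definition fLEC {X : topologicalType} (pX : X -> B) : Prop :=
  closed_embedding (diagFP pX) /\ fcofibration pX (@pFP X pX) (diagFP pX).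

Definition PB_set {X : topologicalType} (pX : X -> B) :
    set (B * {compact-open, II -> X}) :=
  [set ba | continuous (ba.2 : II -> X) /\ forall t, pX (ba.2 t) = ba.1].

Definition PB {X : topologicalType} (pX : X -> B) : topologicalType := set_type (PB_set pX).

Definition pPB {X : topologicalType} (pX : X -> B) (z : PB pX) : B :=
  (set_val z).1.

Lemma PB_sec_mem {X : topologicalType} (pX : X -> B) (sX : B -> X)
  (hs : forall b, pX (sX b) = b) (b : B) :
  (b, (fun _ : II => sX b) : {compact-open, II -> X}) \in PB_set pX.
Proof. by apply/mem_set; split => //=; exact: cst_continuous. Qed.

Definition sPB {X : topologicalType} (pX : X -> B) (sX : B -> X)
  (hs : forall b, pX (sX b) = b) (b : B) : PB pX :=
  SigSub (PB_sec_mem hs b).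

Lemma zeroII_mem : (0 : R) \in [set x : R | 0 <= x <= 1].
Proof. by apply/mem_set => /=; rewrite lexx ler01. Qed.
Lemma oneII_mem : (1 : R) \in [set x : R | 0 <= x <= 1].
Proof. by apply/mem_set => /=; rewrite lexx ler01. Qed.
Definition zeroII : II := SigSub zeroII_mem.
Definition oneII : II := SigSub oneII_mem.

Lemma PiX_mem {X : topologicalType} (pX : X -> B) (z : PB pX) :
  ((set_val z).2 zeroII, (set_val z).2 oneII)
    \in [set xy : X * X | pX xy.1 = pX xy.2].
Proof.
apply/mem_set => /=; have := set_valP z; rewrite /PB_set /= => -[_ h].
by rewrite !h.
Qed.

Definition PiX {X : topologicalType} (pX : X -> B) (z : PB pX) : FP pX :=
  SigSub (PiX_mem z).

Definition secatB_le {E X : topologicalType} (pE : E -> B) (pX : X -> B)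
    (f : E -> X) (k : nat) : Prop :=
  exists U : 'I_k.+1 -> set X,
    [/\ (forall i, open (U i)), \bigcup_i U i = [set: X] &
      forall i, exists s : set_type (U i) -> E,
        [/\ continuous s, fibrewise (pX \o set_val) pE s &
            fhtpy (pX \o set_val) pX (f \o s) set_val]].

Definition secatBB_le {E X : topologicalType} (pE : E -> B) (sE : B -> E)
    (pX : X -> B) (sX : B -> X) (f : E -> X) (k : nat) : Prop :=
  exists U : 'I_k.+1 -> set X,
    [/\ (forall i, open (U i)), \bigcup_i U i = [set: X] &
      forall i, range sX `<=` U i /\ exists s : set_type (U i) -> E,
        [/\ continuous s, fibrewise (pX \o set_val) pE s,
            (forall u, range sX (set_val u) -> s u = sE (pX (set_val u))) &
            fphtpy (pX \o set_val) (fun u => range sX (set_val u)) pX sX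
              (f \o s) set_val]].

Definition secatB {E X : topologicalType} (pE : E -> B) (pX : X -> B)
    (f : E -> X) : \bar R :=
  ereal_inf [set (k%:R)%:E | k in [set k | secatB_le pE pX f k]].

Definition secatBB {E X : topologicalType} (pE : E -> B) (sE : B -> E)
    (pX : X -> B) (sX : B -> X) (f : E -> X) : \bar R :=
  ereal_inf [set (k%:R)%:E | k in [set k | secatBB_le pE sE pX sX f k]].

Definition TCB {X : topologicalType} (pX : X -> B) : \bar R :=
  secatB (@pPB X pX) (@pFP X pX) (@PiX X pX).

Definition TCBB {X : topologicalType} (pX : X -> B) (sX : B -> X)
  (hs : forall b, pX (sX b) = b) : \bar R :=
  secatBB (@pPB X pX) (sPB hs) (@pFP X pX) (sFP pX sX) (@PiX X pX).

End Fibrewise.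

(** The first inequality holds for the (pointed) sectional category of any
    fibrewise pointed map: a pointed cover is in particular a cover.

    For the second, the fibrewise cofibration [Δ : X -> X ×_B X] is used once:
    extending the homotopy [(a, t) ↦ (Δa, t)] from [z ↦ (z, 0)] into the
    subspace [(X ×_B X) × {0} ∪ Δ × I] gives a fibrewise deformation [D] of
    [X ×_B X] fixing [Δ] and a function [g] with [g = 1] on [Δ] such that
    [D(z, 1) ∈ Δ] whenever [g z > 0] (a "diagonal deformation").  Over
    [{g > 0}], going along [D(z, -)] to the diagonal and back gives a strict,
    pointed section of [Π_X].  A [secat_B] cover [U_0, ..., U_k] then yields
    the [secat^B_B] cover [(U_i ∖ {g >= 1/2}) ∪ {g > 1/2}], [{g > 0}] by
    pasting the given sections with the diagonal one over the open sets
    [U_i ∖ {g >= 1/2}] and [{g > 1/2}]. *)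

From HB Require Import structures.
From mathcomp Require Import all_boot all_order all_algebra.
From mathcomp Require Import all_classical reals ereal topology normedtype.
Set Implicit Arguments.
Unset Strict Implicit.
Unset Printing Implicit Defensive.
Import Order.TTheory GRing.Theory Num.Theory.
Import numFieldNormedType.Exports.
Local Open Scope classical_set_scope.
Local Open Scope ring_scope.

Section SubspaceContinuity.
Context {Z T Y : topologicalType}.

Lemma set_val_continuous (A : set T) : continuous (set_val : set_type A -> T).
Proof. exact: initial_continuous. Qed.

Lemma continuous_pair (f : Z -> T) (h : Z -> Y) :
  continuous f -> continuous h -> continuous (fun z => (f z, h z)).
Proof. by move=> cf ch z; apply: cvg_pair; [exact: cf | exact: ch]. Qed.

Lemma continuous_fst : continuous (@fst T Y).
Proof. by move=> p; exact: cvg_fst. Qed.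

Lemma continuous_snd : continuous (@snd T Y).
Proof. by move=> p; exact: cvg_snd. Qed.

Lemma continuous_on_open_piece (P : set Z) (h : set_type P -> Y) (f : Z -> Y) :
  open P -> continuous h ->
  (forall z (p : P z), f z = h (SigSub (mem_set p))) ->
  forall z, P z -> {for z, continuous f}.
Proof.
move=> oP ch fh z Pz.
have : continuous (sigL P f).
  suff -> : sigL P f = h by [].
  by apply: funext => -[w pw]; rewrite /sigL /= (fh w (set_mem pw)); congr h; exact: val_inj.
move/(subspace_sigL_continuousP P f); rewrite continuous_open_subspace //.
by apply; exact: mem_set.
Qed.

Lemma continuous_if_le {R : realType} (h : Z -> R) (c : R) (f1 f2 : Z -> Y) :
  continuous h -> continuous f1 -> continuous f2 ->
  (forall z, h z = c -> f1 z = f2 z) ->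
  continuous (fun z => if h z <= c then f1 z else f2 z).
Proof.
move=> ch cf1 cf2 f12.
have cle : closed [set z | h z <= c] := (continuous_closedP h).1 ch _ (@closed_le R c).
have cge : closed [set z | c <= h z] := (continuous_closedP h).1 ch _ (@closed_ge R c).
apply/continuous_subspace_setT.
have -> : [set: Z] = [set z | h z <= c] `|` [set z | c <= h z].
  apply/seteqP; split => z // _ /=.
  by case: (lerP (h z) c) => hz; [left | right; exact: ltW].
apply: withinU_continuous => //.
- apply: (@subspace_eq_continuous _ _ _ f1); last exact: continuous_subspaceT.
  by move=> z /set_mem /= hz; rewrite /from_subspace hz.
- apply: (@subspace_eq_continuous _ _ _ f2); last exact: continuous_subspaceT.
  move=> z /set_mem /= hz; rewrite /from_subspace; case: ifP => // hz'.
  by apply/esym/f12/eqP; rewrite eq_le hz hz'.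
Qed.

End SubspaceContinuity.

Section Pasting.
Context {T S Y : topologicalType}.

Lemma continuous_on_open_slab (W A : set T) (h : set_type A * S -> Y)
    (f : set_type W * S -> Y) :
  open A -> continuous h ->
  (forall u s (p : A (set_val u)), f (u, s) = h (SigSub (mem_set p), s)) ->
  forall u s, A (set_val u) -> {for (u, s), continuous f}.
Proof.
move=> oA ch fh u s Au.
pose E := [set p : set_type W * S | A (set_val p.1)].
have cW1 : continuous (fun p : set_type W * S => set_val p.1).
  by move=> p; apply: continuous_comp; [exact: continuous_fst | exact: set_val_continuous].
have oE : open E by exact: (continuousP _).1 cW1 _ oA.
pose toA (e : set_type E) : set_type A := SigSub (mem_set (set_valP e : A (set_val (set_val e).1))).
have ctoA : continuous toA.
  apply: continuous_comp_initial => e.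
  apply: (@continuous_comp _ _ _ set_val (fun p : set_type W * S => set_val p.1)).
    exact: set_val_continuous.
  exact: cW1.
apply: (continuous_on_open_piece (h := fun e => h (toA e, (set_val e).2))) => //.
- move=> e; apply: continuous_comp; last exact: ch.
  apply: continuous_pair => // e'; apply: continuous_comp;
    [exact: set_val_continuous | exact: continuous_snd].
- case=> w t Ew; rewrite (fh w t Ew); congr (h (_, _)); exact: val_inj.
Qed.

Context (W P Q : set T) (cover : forall x, W x -> ~ P x -> Q x)
  (disjoint : forall x, P x -> Q x -> False)
  (hP : set_type P * S -> Y) (hQ : set_type Q * S -> Y).

Definition paste (ws : set_type W * S) : Y :=
  match pselect (P (set_val ws.1)) with
  | left p => hP (SigSub (mem_set p), ws.2)
  | right np => hQ (SigSub (mem_set (cover (set_valP ws.1) np)), ws.2)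
  end.

Lemma pasteP (u : set_type W) s (p : P (set_val u)) :
  paste (u, s) = hP (SigSub (mem_set p), s).
Proof.
rewrite /paste /=; case: pselect => [p'|//].
by congr (hP (_, _)); exact: val_inj.
Qed.

Lemma pasteQ (u : set_type W) s (q : Q (set_val u)) :
  paste (u, s) = hQ (SigSub (mem_set q), s).
Proof.
rewrite /paste /=; case: pselect => [p|np]; first by case: (disjoint p q).
by congr (hQ (_, _)); exact: val_inj.
Qed.

Lemma paste_continuous : open P -> open Q -> continuous hP -> continuous hQ ->
  continuous paste.
Proof.
move=> oP oQ cP cQ [u s]; case: (pselect (P (set_val u))) => [p|np].
  exact: (continuous_on_open_slab oP cP pasteP).
exact: (continuous_on_open_slab oQ cQ pasteQ (cover (set_valP u) np)).
Qed.

End Pasting.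

(** Reparametrisations of the unit interval used to traverse a path
    [t ↦ D(z,t)] forwards on [[0,1/2]] and backwards on [[1/2,1]]:
    [double t = min(2t, 1)] and [double_rev t = min(2 - 2t, 1)]. *)
Section UnitInterval.
Context {R : realType}.
Notation I := (@II R).

Lemma II_ge0 (t : I) : 0 <= set_val t.
Proof. by case/andP: (set_valP t). Qed.

Lemma II_le1 (t : I) : set_val t <= 1.
Proof. by case/andP: (set_valP t). Qed.

Lemma clamp_mem (r : R) : 0 <= r -> Num.min r 1 \in [set x : R | 0 <= x <= 1].
Proof. by move=> r0; apply/mem_set; rewrite /= ge_min lexx orbT le_min r0 ler01. Qed.

Lemma double_ge0 (t : I) : 0 <= 2 * set_val t.
Proof. by rewrite mulr_ge0 // II_ge0. Qed.

Lemma double_rev_ge0 (t : I) : 0 <= 2 - 2 * set_val t.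
Proof. by rewrite subr_ge0 -{2}(mulr1 2) ler_pM2l // II_le1. Qed.

Definition double (t : I) : I := SigSub (clamp_mem (double_ge0 t)).
Definition double_rev (t : I) : I := SigSub (clamp_mem (double_rev_ge0 t)).

Lemma double_continuous : continuous double.
Proof.
apply: continuous_comp_initial => t /=.
apply: (@continuous_min R I (fun t => 2 * set_val t) (fun=> 1)); last exact: cst_continuous.
apply: (@continuousM R I (fun=> 2) set_val); first exact: cst_continuous.
exact: set_val_continuous.
Qed.

Lemma double_rev_continuous : continuous double_rev.
Proof.
apply: continuous_comp_initial => t /=.
apply: (@continuous_min R I (fun t => 2 - 2 * set_val t) (fun=> 1)); last exact: cst_continuous.
apply: (@continuousB R R^o I (fun=> 2) (fun t => 2 * set_val t)); first exact: cst_continuous.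
apply: (@continuousM R I (fun=> 2) set_val); first exact: cst_continuous.
exact: set_val_continuous.
Qed.

Lemma double0 : double zeroII = zeroII.
Proof. by apply: val_inj; rewrite /= mulr0 /Num.min ltr01. Qed.

Lemma double_rev1 : double_rev oneII = zeroII.
Proof. by apply: val_inj; rewrite /= mulr1 subrr /Num.min ltr01. Qed.

Lemma double_half (t : I) : set_val t = 2^-1 -> double t = oneII /\ double_rev t = oneII.
Proof.
have h2 : (2 : R) * 2^-1 = 1 by rewrite mulfV // pnatr_eq0.
by move=> ht; split; apply: val_inj; rewrite /= ht h2 ?(addrK 1) minxx.
Qed.

Lemma half_gt0 : (0 : R) < 2^-1.
Proof. by rewrite invr_gt0 ltr0n. Qed.

Lemma half_lt1 : (2 : R)^-1 < 1.
Proof. by rewrite invf_lt1 ?ltr1n ?ltr0n. Qed.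

End UnitInterval.

(** This is the fibrewise Strøm structure of the pair [(X ×_B X, Δ)]. *)
Section DiagonalDeformation.
Context {R : realType} {B X : topologicalType} (pX : X -> B).
Notation I := (@II R).
Notation FPX := (FP pX).
Notation pF := (@pFP B X pX).

Record diagonal_deformation (D : FPX * I -> FPX) (g : FPX -> R) : Prop := {
  dd_D_continuous : continuous D;
  dd_g_continuous : continuous g;
  dd_start : forall z, D (z, zeroII) = z;
  dd_fibrewise : forall z t, pF (D (z, t)) = pF z;
  dd_diag : forall a t, D (diagFP pX a, t) = diagFP pX a;
  dd_g_diag : forall a, g (diagFP pX a) = 1;
  dd_end : forall z, 0 < g z ->
    (set_val (D (z, oneII))).1 = (set_val (D (z, oneII))).2 }.

Lemma pFP_continuous : continuous pX -> continuous pF.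
Proof.
move=> pX_cont z; apply: (@continuous_comp _ _ _ (fun z : FPX => (set_val z).1));
  last exact: pX_cont.
by apply: continuous_comp; [exact: set_val_continuous | exact: continuous_fst].
Qed.

(** The subspace [(X ×_B X) × {0} ∪ Δ × I] of [(X ×_B X) × I], the target of
    the homotopy extension problem that produces a diagonal deformation. *)
Definition cyl_set : set (FPX * I) :=
  [set w | set_val w.2 = 0 \/ (set_val w.1).1 = (set_val w.1).2].

Definition cyl_base (z : FPX) : set_type cyl_set :=
  SigSub (mem_set (or_introl erefl : cyl_set (z, zeroII))).

Definition cyl_diag (p : X * I) : set_type cyl_set :=
  SigSub (mem_set (or_intror erefl : cyl_set (diagFP pX p.1, p.2))).

Lemma cyl_base_continuous : continuous cyl_base.
Proof.
apply: continuous_comp_initial.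
by apply: (@continuous_pair _ _ _ id (fun=> zeroII)); [move=> ? | exact: cst_continuous].
Qed.

Lemma cyl_diag_continuous : continuous (diagFP pX) -> continuous cyl_diag.
Proof.
move=> cdiag; apply: continuous_comp_initial; apply: continuous_pair; last exact: continuous_snd.
by move=> p; apply: continuous_comp; [exact: continuous_fst | exact: cdiag].
Qed.

(** Extending the homotopy [(a,t) ↦ (Δa, t)] of [Δ] from the inclusion
    [z ↦ (z, 0)] yields a diagonal deformation: [D] and [g] are the two
    coordinates of the extension. *)
Lemma fcofibration_diagonal_deformation :
  fcofibration (R := R) pX pF (diagFP pX) -> exists D g, diagonal_deformation D g.
Proof.
case=> cdiag [_ hep].
have start a (t : I) : set_val t = 0 -> cyl_diag (a, t) = cyl_base (diagFP pX a).
  by move=> t0; apply: val_inj; congr pair; exact: val_inj.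
have [H [cH Hfib H0 Hdiag]] := hep _ (fun w : set_type cyl_set => pF (set_val w).1)
  cyl_base cyl_diag cyl_base_continuous (fun=> erefl) (cyl_diag_continuous cdiag)
  (fun _ _ => erefl) start.
have cHval : continuous (fun p => set_val (H p)).
  by move=> p; apply: continuous_comp; [exact: cH | exact: set_val_continuous].
exists (fun p => (set_val (H p)).1), (fun z => set_val (set_val (H (z, oneII))).2); split.
- move=> p; apply: (@continuous_comp _ _ _ (fun p => set_val (H p)) fst).
    exact: cHval.
  exact: continuous_fst.
- move=> z; apply: (@continuous_comp _ _ _ (fun z => (z, oneII))
    (fun p => set_val (set_val (H p)).2)).
    by apply: (@continuous_pair _ _ _ id (fun=> oneII)); [move=> ? | exact: cst_continuous].
  apply: (@continuous_comp _ _ _ (fun p => set_val (H p)) (fun w => set_val w.2)).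
    exact: cHval.
  by apply: continuous_comp; [exact: continuous_snd | exact: set_val_continuous].
- by move=> z; rewrite H0.
- by move=> z t; exact: Hfib.
- by move=> a t; rewrite Hdiag.
- by move=> a; rewrite Hdiag.
- move=> z gz; case: (set_valP (H (z, oneII))) => // g0.
  by move: gz; rewrite g0 ltxx.
Qed.

End DiagonalDeformation.

(** From a diagonal deformation, every [z = (x, y)] with [g z > 0] gets a
    canonical fibrewise path from [x] to [y]: follow the first coordinate of
    [D(z, -)] to the diagonal point [D(z, 1)], then the second one back. *)
Section DiagonalPaths.
Context {R : realType} {B X : topologicalType} (pX : X -> B) (pX_cont : continuous pX).
Notation I := (@II R).
Notation FPX := (FP pX).
Notation pF := (@pFP B X pX).
Context (D : FPX * I -> FPX) (g : FPX -> R) (dd : diagonal_deformation D g).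

Definition diag_nbhd : set FPX := [set z | 0 < g z].

Definition diag_path (z : FPX) (t : I) : X :=
  if set_val t <= 2^-1 then (set_val (D (z, double t))).1
  else (set_val (D (z, double_rev t))).2.

Lemma diag_path_fibre z t : pX (diag_path z t) = pF z.
Proof.
rewrite /diag_path; case: ifP => _; first exact: (dd_fibrewise dd).
by rewrite -(set_valP (D (z, double_rev t))); exact: (dd_fibrewise dd).
Qed.

Lemma diag_path_ends z : (diag_path z zeroII, diag_path z oneII) = set_val z.
Proof.
rewrite /diag_path /= (ltW half_gt0) leNgt half_lt1 /=.
by rewrite double0 double_rev1 (dd_start dd) -surjective_pairing.
Qed.

Lemma diag_path_diag a t : diag_path (diagFP pX a) t = a.
Proof. by rewrite /diag_path !(dd_diag dd); case: ifP. Qed.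

Lemma diag_path_continuous (A : set FPX) : A `<=` diag_nbhd ->
  continuous (fun p : set_type A * I => diag_path (set_val p.1) p.2).
Proof.
move=> Ag.
have cD (k : I -> I) (pr : FPX -> X) : continuous k -> continuous pr ->
    continuous (fun p : set_type A * I => pr (D (set_val p.1, k p.2))).
  move=> ck cpr p; apply: (@continuous_comp _ _ _ (fun p : set_type A * I =>
    D (set_val p.1, k p.2))); last exact: cpr.
  apply: (@continuous_comp _ _ _ (fun p : set_type A * I => (set_val p.1, k p.2)) D);
    last exact: (dd_D_continuous dd).
  apply: continuous_pair => q; apply: continuous_comp.
  - exact: continuous_fst.
  - exact: set_val_continuous.
  - exact: continuous_snd.
  - exact: ck.
have cpr1 : continuous (fun z : FPX => (set_val z).1).
  by move=> z; apply: continuous_comp; [exact: set_val_continuous | exact: continuous_fst].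
have cpr2 : continuous (fun z : FPX => (set_val z).2).
  by move=> z; apply: continuous_comp; [exact: set_val_continuous | exact: continuous_snd].
apply: continuous_if_le.
- by move=> p; apply: continuous_comp; [exact: continuous_snd | exact: set_val_continuous].
- exact: cD double_continuous cpr1.
- exact: cD double_rev_continuous cpr2.
- move=> [u t] /= /double_half [-> ->].
  exact: (dd_end dd (Ag _ (set_valP u))).
Qed.

Section DiagonalSection.
Context (A : set FPX) (Ag : A `<=` diag_nbhd).

Lemma diag_section_mem (u : set_type A) :
  (pF (set_val u), (diag_path (set_val u) : {compact-open, I -> X})) \in PB_set pX.
Proof.
apply/mem_set; split; last by move=> t; exact: diag_path_fibre.
move=> t; apply: (@continuous_comp _ _ _ (fun t => (u, t))
  (fun p : set_type A * I => diag_path (set_val p.1) p.2)).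
  by apply: (@continuous_pair _ _ _ (fun=> u) id); [exact: cst_continuous | move=> ?].
exact: diag_path_continuous.
Qed.

Definition diag_section (u : set_type A) : PB pX := SigSub (diag_section_mem u).

Lemma diag_section_continuous : continuous diag_section.
Proof.
apply: continuous_comp_initial; apply: continuous_pair.
  by move=> u; apply: continuous_comp; [exact: set_val_continuous | exact: pFP_continuous].
exact: continuous_curry_fun (diag_path_continuous Ag).
Qed.

Lemma PiX_diag_section (u : set_type A) : PiX (diag_section u) = set_val u.
Proof. by apply: val_inj; exact: diag_path_ends. Qed.

Lemma diag_section_base (sX : B -> X) (hs : forall b, pX (sX b) = b) (u : set_type A) :
  range (sFP pX sX) (set_val u) -> diag_section u = sPB hs (pF (set_val u)).
Proof.
case=> b _ ub; apply: val_inj; rewrite /= -ub /sFP.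
by congr pair; apply: funext => t; rewrite diag_path_diag /pFP /= hs.
Qed.

End DiagonalSection.
End DiagonalPaths.

Section Sectional.
Context {R : realType} {B E Z : topologicalType} (pE : E -> B) (sE : B -> E)
  (pZ : Z -> B) (sZ : B -> Z) (f : E -> Z).

Definition sectional (U : set Z) : Prop :=
  exists s : set_type U -> E,
    [/\ continuous s, fibrewise (pZ \o set_val) pE s &
        fhtpy (R := R) (pZ \o set_val) pZ (f \o s) set_val].

Definition pointed_sectional (U : set Z) : Prop :=
  range sZ `<=` U /\ exists s : set_type U -> E,
    [/\ continuous s, fibrewise (pZ \o set_val) pE s,
        (forall u, range sZ (set_val u) -> s u = sE (pZ (set_val u))) &
        fphtpy (R := R) (pZ \o set_val) (fun u => range sZ (set_val u)) pZ sZ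
          (f \o s) set_val].

Lemma pointed_sectional_sectional U : pointed_sectional U -> sectional U.
Proof.
case=> _ [s [cs fs _ [H [cH H0 H1 Hf _]]]].
by exists s; split => //; exists H; split.
Qed.

Lemma secatBB_le_secatB_le k :
  secatBB_le (R := R) pE sE pZ sZ f k -> secatB_le (R := R) pE pZ f k.
Proof.
case=> U [oU cU sU]; exists U; split => // i.
exact: pointed_sectional_sectional (sU i).
Qed.

End Sectional.

Section NatInfimum.
Context {R : realType}.
Local Open Scope ereal_scope.

Definition nat_inf (P : set nat) : \bar R := ereal_inf [set (k%:R)%:E | k in P].

Lemma nat_inf_le (P Q : set nat) : Q `<=` P -> nat_inf P <= nat_inf Q.
Proof.
move=> QP; apply: le_ereal_inf_tmp => _ [k Qk <-].
by apply: ereal_inf_lbound; exists k => //; exact: QP.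
Qed.

Lemma nat_inf_succ (P Q : set nat) :
  (forall k, P k -> Q k.+1) -> nat_inf Q <= nat_inf P + 1.
Proof.
move=> PQ; case: (pselect (exists k, P k)) => [[k0 Pk0] | noP]; last first.
  suff -> : nat_inf P = +oo by rewrite addye ?leey.
  by apply/ereal_inf_pinfty => _ [k Pk <-]; case: noP; exists k.
have exP : exists k, `[< P k >] by exists k0; exact/asboolP.
case: (ex_minnP exP) => m /asboolP Pm minm.
have infQ : nat_inf Q <= (m.+1%:R)%:E by apply: ereal_inf_lbound; exists m.+1 => //; exact: PQ.
have infP : (m%:R)%:E <= nat_inf P.
  apply: le_ereal_inf_tmp => _ [n Pn <-]; rewrite lee_fin ler_nat.
  by apply: minm; exact/asboolP.
by apply: (le_trans infQ); rewrite -natr1 EFinD leeD2r.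
Qed.

End NatInfimum.

(** Each open set
    [U] is replaced by [(U ∖ {g >= 1/2}) ∪ {g > 1/2}], which contains the base
    points, and [{g > 0}] is added; on [{g > 1/2}] the diagonal paths give a
    strict pointed section of [Π_X]. *)
Section PointedCover.
Context {R : realType} {B X : topologicalType} (pX : X -> B) (pX_cont : continuous pX)
  (sX : B -> X) (hs : forall b, pX (sX b) = b).
Notation I := (@II R).
Notation FPX := (FP pX).
Notation pF := (@pFP B X pX).
Context (D : FPX * I -> FPX) (g : FPX -> R) (dd : diagonal_deformation D g).

Notation sectionalPi := (sectional (R := R) (@pPB R B X pX) pF (@PiX R B X pX)).
Notation pointed_sectionalPi :=
  (pointed_sectional (R := R) (@pPB R B X pX) (sPB hs) pF (sFP pX sX) (@PiX R B X pX)).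

Definition inner_nbhd : set FPX := [set z | 2^-1 < g z].
Definition inner_closure : set FPX := [set z | 2^-1 <= g z].

Lemma open_diag_nbhd : open (diag_nbhd g).
Proof. exact: (continuousP g).1 (dd_g_continuous dd) _ (@open_gt R 0). Qed.

Lemma open_inner_nbhd : open inner_nbhd.
Proof. exact: (continuousP g).1 (dd_g_continuous dd) _ (@open_gt R 2^-1). Qed.

Lemma closed_inner_closure : closed inner_closure.
Proof. exact: (continuous_closedP g).1 (dd_g_continuous dd) _ (@closed_ge R 2^-1). Qed.

Lemma inner_nbhd_sub : inner_nbhd `<=` diag_nbhd g.
Proof. by move=> z; apply: lt_trans; exact: half_gt0. Qed.

Lemma base_inner_nbhd : range (sFP pX sX) `<=` inner_nbhd.
Proof. by move=> _ [b _ <-]; rewrite /inner_nbhd /= (dd_g_diag dd) half_lt1. Qed.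

Lemma pointed_sectional_diag (A : set FPX) (Ag : A `<=` diag_nbhd g) :
  range (sFP pX sX) `<=` A -> pointed_sectionalPi A.
Proof.
move=> baseA; split => //; exists (diag_section dd Ag); split.
- exact: diag_section_continuous.
- by [].
- exact: diag_section_base.
exists (fun p => set_val p.1); split.
- by move=> p; apply: continuous_comp; [exact: continuous_fst | exact: set_val_continuous].
- by move=> u t _ /=; rewrite PiX_diag_section.
- by [].
- by [].
- by move=> u t [b _ ub]; rewrite /= -ub /pFP /= hs.
Qed.

Section Extension.
Context (U : set FPX) (oU : open U) (secU : sectionalPi U).

Let Q := U `\` inner_closure.
Let W := Q `|` inner_nbhd.

Let cover : forall z, W z -> ~ inner_nbhd z -> Q z.
Proof. by move=> z [|]. Qed.

Let disjoint : forall z, inner_nbhd z -> Q z -> False.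
Proof. by move=> z /ltW zC [_]. Qed.

Let oQ : open Q.
Proof. by apply: openI => //; rewrite openC; exact: closed_inner_closure. Qed.

Definition QtoU (q : set_type Q) : set_type U :=
  SigSub (mem_set (proj1 (set_valP q : Q (set_val q)))).

Lemma QtoU_continuous : continuous QtoU.
Proof. by apply: continuous_comp_initial; exact: set_val_continuous. Qed.

(** The sections are pasted as time-independent families, read at time [0]. *)
Lemma pointed_sectional_extend : pointed_sectionalPi W.
Proof.
have [s [cs fs [G [cG G0 G1 Gf]]]] := secU.
pose sV (p : set_type inner_nbhd * I) := diag_section dd inner_nbhd_sub p.1.
pose sQ (p : set_type Q * I) := s (QtoU p.1).
pose GV (p : set_type inner_nbhd * I) : FPX := set_val p.1.
pose GQ (p : set_type Q * I) : FPX := G (QtoU p.1, p.2).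
have cQ1 : continuous (fun p : set_type Q * I => QtoU p.1).
  by move=> p; apply: continuous_comp; [exact: continuous_fst | exact: QtoU_continuous].
pose sW (u : set_type W) := paste cover sV sQ (u, zeroII).
have baseW (u : set_type W) : range (sFP pX sX) (set_val u) -> inner_nbhd (set_val u).
  by move=> /base_inner_nbhd.
split; first by move=> z /base_inner_nbhd; right.
exists sW; split.
- move=> u; apply: (@continuous_comp _ _ _ (fun u => (u, zeroII)) (paste cover sV sQ)).
    by apply: (@continuous_pair _ _ _ id (fun=> zeroII)); [move=> ? | exact: cst_continuous].
  apply: (paste_continuous disjoint open_inner_nbhd oQ).
  + move=> p; apply: continuous_comp; [exact: continuous_fst | exact: diag_section_continuous].
  + by move=> p; apply: continuous_comp; [exact: cQ1 | exact: cs].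
- move=> u; rewrite /sW; case: (pselect (inner_nbhd (set_val u))) => [p | np].
    by rewrite (pasteP _ _ _ _ p).
  by rewrite (pasteQ _ disjoint _ _ _ (cover (set_valP u) np)); exact: fs.
- move=> u ub; rewrite /sW (pasteP _ _ _ _ (baseW u ub)); exact: diag_section_base.
exists (paste cover GV GQ); split.
- apply: (paste_continuous disjoint open_inner_nbhd oQ).
  + by move=> p; apply: continuous_comp; [exact: continuous_fst | exact: set_val_continuous].
  + move=> p; apply: (@continuous_comp _ _ _ (fun p : set_type Q * I => (QtoU p.1, p.2)) G).
      by apply: continuous_pair => //; exact: continuous_snd.
    exact: cG.
- move=> u t t0; rewrite /sW /=; case: (pselect (inner_nbhd (set_val u))) => [p | np].
    by rewrite !(pasteP _ _ _ _ p) /GV /sV PiX_diag_section.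
  by rewrite !(pasteQ _ disjoint _ _ _ (cover (set_valP u) np)) /GQ G0.
- move=> u t t1; case: (pselect (inner_nbhd (set_val u))) => [p | np].
    by rewrite pasteP.
  by rewrite (pasteQ _ disjoint _ _ _ (cover (set_valP u) np)) /GQ G1.
- move=> u t; case: (pselect (inner_nbhd (set_val u))) => [p | np].
    by rewrite pasteP.
  by rewrite (pasteQ _ disjoint _ _ _ (cover (set_valP u) np)) /GQ Gf.
- move=> u t ub; rewrite (pasteP _ _ _ _ (baseW u ub)).
  change (set_val u = sFP pX sX (pF (set_val u))).
  by case: ub => b _ <-; rewrite /pFP /= hs.
Qed.

End Extension.

Lemma secatB_le_secatBB_le_succ k :
  secatB_le (R := R) (@pPB R B X pX) pF (@PiX R B X pX) k ->
  secatBB_le (R := R) (@pPB R B X pX) (sPB hs) pF (sFP pX sX) (@PiX R B X pX) k.+1.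
Proof.
case=> U [oU cU secU].
pose U' (i : 'I_k.+2) : set FPX :=
  if (i < k.+1)%N then (U (inord i) `\` inner_closure) `|` inner_nbhd else diag_nbhd g.
exists U'; split.
- move=> i; rewrite /U'; case: ifP => _; last exact: open_diag_nbhd.
  apply: openU; last exact: open_inner_nbhd.
  by apply: openI => //; rewrite openC; exact: closed_inner_closure.
- apply/seteqP; split => // z _; case: (pselect (inner_closure z)) => Cz.
    exists ord_max => //; rewrite /U' /= ltnn.
    exact: lt_le_trans half_gt0 Cz.
  have : [set: FPX] z by [].
  rewrite -cU => -[j _ Ujz]; exists (widen_ord (leqnSn k.+1) j) => //.
  by rewrite /U' /= ltn_ord inord_val; left.
- move=> i; rewrite /U'; case: (i < k.+1)%N.
    exact: pointed_sectional_extend (oU (inord i)) (secU (inord i)).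
  by apply: pointed_sectional_diag => // z /base_inner_nbhd /inner_nbhd_sub.
Qed.

End PointedCover.

Lemma secatB_le_secatBB {R : realType} {B E Z : topologicalType} (pE : E -> B)
    (sE : B -> E) (pZ : Z -> B) (sZ : B -> Z) (f : E -> Z) :
  (secatB (R := R) pE pZ f <= secatBB (R := R) pE sE pZ sZ f)%E.
Proof. by apply: nat_inf_le => k; exact: secatBB_le_secatB_le. Qed.

Local Open Scope ereal_scope.

Theorem corollary3p5 (R : realType) (B X : topologicalType)
  (pX : X -> B) (sX : B -> X)
  (pX_cont : continuous pX) (sX_cont : continuous sX)
  (hs : forall b, pX (sX b) = b) :
  fLEC (R := R) pX -> normal_space (FP pX) ->
  TCB (R := R) pX <= TCBB (R := R) hs /\ TCBB (R := R) hs <= TCB (R := R) pX + 1.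
Proof.
move=> [_ cofib] _; split; first exact: secatB_le_secatBB.
have [D [g dd]] := fcofibration_diagonal_deformation cofib.
apply: nat_inf_succ => k; exact: (secatB_le_secatBB_le_succ pX_cont hs dd).
Qed.
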